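(* Let $s'\in\mathbb C$ and $f\in C_c^{\mathrm{lc}}(S\mathfrak X)$, regarded as a function on $G/M$ via $gM\mapsto f(go,g\omega_+)$. Then for every $n\in\mathbb N_0$ and $g\in G$, $$\mathcal I_{s',n}(f)(g)=\sum_{\substack{x\in H_{\omega_+}(o)\\ d(x,o)\le 2n}}f(gx,g\omega_+)\,q^{-d(x,o)(\frac12-i\overline{s'})}.$$ In particular $\mathcal I_{s',0}(f)=f$.
   Context: Let $q\ge2$, $\mathfrak G$ the $(q+1)$-regular tree with vertex set $\mathfrak X$, graph distance $d$ and boundary $\Omega$ (infinite non-backtracking edge chains modulo eventual equality up to shift); $[x,\omega)$ is the ray from $x$ to $\omega$. Fix a vertex $o$ and $\omega_-\ne\omega_+$ with $o$ on the geodesic $]\omega_-,\omega_+[$; $\langle x,\omega\rangle=d(o,y)-d(x,y)$ where $[o,\omega)\cap[x,\omega)=[y,\omega)$. $H_{\omega_+}(o)=\{x\in\mathfrak X:\langle x,\omega_+\rangle=0\}$. $S\mathfrak X=\mathfrak X\times\Omega$, $C_c^{\mathrm{lc}}(S\mathfrak X)$ its locally constant compactly supported functions. $G=\mathrm{Aut}(\mathfrak G)$, $K=\mathrm{Stab}_G(o)$, $M=\{\gamma\in K:\gamma$ fixes $]\omega_-,\omega_+[$ pointwise$\}$, $B_{\omega_+}=\{g\in G:g\omega_+=\omega_+,\ g\text{ fixes some vertex}\}$, a unimodular locally compact group whose Haar measure $du$ is normalized so that $B_{\omega_+}\cap\mathrm{Stab}_G(x)$ has measure $q^{\langle x,\omega_+\rangle}$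 for each $x\in\mathfrak X$. For $n\in\mathbb N_0$ let $x_n$ be the vertex of $[o,\omega_+)$ with $d(o,x_n)=n$ and $B_{\omega_+,n}=B_{\omega_+}\cap\mathrm{Stab}_G(x_n)$. For functions $F$ on $G/M$, $\mathcal I_{s',n}(F)(gM)=\int_{B_{\omega_+,n}}F(guM)\,q^{\langle uo,\omega_-\rangle(\frac12-i\overline{s'})}\,du$. *)

From HB Require Import structures.
From Stdlib Require ClassicalEpsilon.
From mathcomp Require Import all_boot all_algebra.
From mathcomp Require Import all_classical all_reals all_analysis.
From mathcomp Require Import complex.

Set Implicit Arguments.
Unset Strict Implicit.
Unset Printing Implicit Defensive.

Import GRing.Theory Num.Theory.
Local Open Scope classical_set_scope.
Local Open Scope ring_scope.

Section Tree.
Variables (X : choiceType) (adj : X -> X -> Prop).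

Fixpoint walk (x : X) (p : seq X) : Prop :=
  match p with [::] => True | y :: p' => adj x y /\ walk y p' end.

Fixpoint nbt (a b : X) (p : seq X) : Prop :=
  match p with [::] => True | c :: p' => a <> c /\ nbt b c p' end.

(* x :: p has no backtracking a, b, a *)
Definition nonbacktracking (x : X) (p : seq X) : Prop :=
  match p with [::] => True | y :: p' => nbt x y p' end.

Definition is_regular_tree (q : nat) : Prop :=
  (forall x y, adj x y -> adj y x) /\
  (forall x, ~ adj x x) /\
  (forall x, exists nb : 'I_q.+1 -> X,
      injective nb /\ forall y, adj x y <-> exists i, nb i = y) /\
  (forall x y, exists p, walk x p /\ last x p = y) /\
  (forall x p, walk x p -> nonbacktracking x p -> last x p = x -> p = [::]).

Definition walkn (n : nat) (x y : X) : Prop :=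
  exists p, walk x p /\ last x p = y /\ size p = n.

Lemma walkn_ex_bool (x y : X) :
  (exists n, walkn n x y) -> exists n, `[< walkn n x y >].
Proof. by case=> n h; exists n; apply/asboolP. Qed.

Definition dist (x y : X) : nat :=
  match pselect (exists n, walkn n x y) with
  | left h => ex_minn (walkn_ex_bool h)
  | right _ => 0%N
  end.

Definition ray (r : nat -> X) : Prop :=
  forall n, adj (r n) (r n.+1) /\ r n <> r n.+2.

(* equality of boundary points: eventual equality up to shift *)
Definition ends_eq (r r' : nat -> X) : Prop :=
  exists k m, forall j, r (j + k)%N = r' (j + m)%N.

Definition ray_to (x : X) (w r : nat -> X) : Prop :=
  ray r /\ r 0%N = x /\ ends_eq r w.

Definition on_ray (r : nat -> X) (v : X) : Prop := exists n, r n = v.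

Definition confluence (o x : X) (w : nat -> X) : X :=
  ClassicalEpsilon.epsilon (inhabits o) (fun y =>
    exists ro rx ry, ray_to o w ro /\ ray_to x w rx /\ ray_to y w ry /\
      forall v, (on_ray ro v /\ on_ray rx v) <-> on_ray ry v).

Definition horo (o x : X) (w : nat -> X) : int :=
  (dist o (confluence o x w))%:Z - (dist x (confluence o x w))%:Z.

Definition xpt (o : X) (w : nat -> X) (n : nat) : X :=
  ClassicalEpsilon.epsilon (inhabits o) (fun v =>
    exists r, ray_to o w r /\ on_ray r v /\ dist o v = n).

Definition is_aut (g : X -> X) : Prop :=
  bijective g /\ forall x y, adj x y <-> adj (g x) (g y).

Definition Bw (w : nat -> X) : set (X -> X) :=
  [set u | is_aut u /\ ends_eq (u \o w) w /\ exists x, u x = x].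

Definition Bwn (o : X) (w : nat -> X) (n : nat) : set (X -> X) :=
  [set u | Bw w u /\ u (xpt o w n) = xpt o w n].

(* locally constant, compactly supported functions on X x Omega, given
   on representatives (rays) and invariant under equality of ends;
   the topology on Omega (based at x) has the cones
   {w' : [x,w') passes through the N-th vertex of [x,w)} as a basis. *)
Definition lc_compact (R : realType) (f : X -> (nat -> X) -> R[i]) : Prop :=
  (forall x r r', ray r -> ray r' -> ends_eq r r' -> f x r = f x r') /\
  (exists S : seq X, forall x r, ray r -> x \notin S -> f x r = 0) /\
  (forall x r, ray r -> exists N : nat, forall r', ray r' ->
      (exists rx rx', ray_to x r rx /\ ray_to x r' rx' /\ rx N = rx' N) ->
      f x r' = f x r).

End Tree.

(* Measurable structure on automorphisms: X -> X with the sigma-algebra *)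
(* generated by the cylinders {u | u x = y}, i.e. the Borel sets of the *)
(* topology of pointwise convergence (X is discrete and countable).     *)
Definition autfun (X : Type) := X -> X.
HB.instance Definition _ (X : choiceType) :=
  Choice.copy (autfun X) (X -> X).
HB.instance Definition _ (X : choiceType) :=
  isPointed.Build (autfun X) (fun x => x).

Definition cylinders (X : choiceType) : set (set (autfun X)) :=
  [set A | exists x y : X, A = [set u | u x = y]].

Definition AutM (X : choiceType) := g_sigma_algebraType (@cylinders X).

Local Open Scope complex_scope.

Definition cpow (R : realType) (b : R) (z : R[i]) : R[i] :=
  (expR (complex.Re z * ln b) * cos (complex.Im z * ln b)) +i*
  (expR (complex.Re z * ln b) * sin (complex.Im z * ln b)).

Definition cintegral (R : realType) (X : choiceType)
    (mu : {measure set (AutM X) -> \bar R}) (D : set (AutM X))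
    (F : AutM X -> R[i]) : R[i] :=
  Rintegral mu D (fun u => complex.Re (F u)) +i*
  Rintegral mu D (fun u => complex.Im (F u)).

Definition haar_normalized (R : realType) (X : choiceType)
    (adj : X -> X -> Prop) (q : nat) (o : X) (wp : nat -> X)
    (mu : {measure set (AutM X) -> \bar R}) : Prop :=
  (forall g : X -> X, Bw adj wp g ->
     forall A : set (AutM X), measurable A -> A `<=` Bw adj wp ->
       mu [set (g \o (u : X -> X)) | u in A] = mu A) /\
  (forall x : X,
     mu [set u : AutM X | Bw adj wp u /\ u x = x] =
     ((q%:R : R) ^ horo adj o x wp)%:E).

Definition expo (R : realType) (s' : R[i]) : R[i] :=
  (2^-1 : R)%:C - 'i * s'^*.

(* I_{s',n}(F)(g) = \int_{B_{w+,n}} F(g u M) q^{<uo, w->(1/2 - i conj s')} du,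
   for F a function on G/M, i.e. on automorphisms (right M-invariant). *)
Definition Isn (R : realType) (X : choiceType) (adj : X -> X -> Prop)
    (mu : {measure set (AutM X) -> \bar R}) (q : nat) (o : X)
    (wm wp : nat -> X) (s' : R[i]) (n : nat)
    (F : (X -> X) -> R[i]) (g : X -> X) : R[i] :=
  cintegral mu (Bwn adj o wp n) (fun u : AutM X =>
    F (g \o (u : X -> X)) *
    cpow (q%:R : R) (((horo adj o (u o) wm)%:~R : R)%:C * expo s')).

Definition onGM (R : realType) (X : choiceType) (o : X) (wp : nat -> X)
    (f : X -> (nat -> X) -> R[i]) (g : X -> X) : R[i] :=
  f (g o) (g \o wp).

From HB Require Import structures.
From mathcomp Require Import all_boot all_algebra.
From mathcomp Require Import all_classical all_reals all_analysis.
From mathcomp Require Import complex.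
From mathcomp Require Import lebesgue_measure measurable_realfun zify.
From mathcomp Require finmap.

(* Write B_n for B_{w+,n} and S_n for the points x of the horosphere H_{w+}(o)
   with d(x, o) <= 2n.  An element u of B_n fixes w+ and x_n, hence the whole
   ray [x_n, w+).  So the ray from u o to w+ joins [o, w+) at some x_a with
   a <= n: u o lies on H_{w+}(o) at distance 2a from o, and as o lies on
   ]w-, w+[ the path from u o to o goes on along [o, w-), which gives
   <u o, w-> = - d(u o, o).  Hence the integrand is constant on each fibre
   {u in B_n | u o = x}, x in S_n.  A nonempty fibre is a left translate of
   B_{w+} /\ Stab(o), so it has measure 1; the fibres partition B_n, which has
   measure q^n, and S_n has at most q^n points (ends of non-backtracking walks
   of length n from x_n that do not start towards x_{n+1}).  Therefore every
   fibre has measure 1 and the integral is the sum over S_n. *)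

Set Implicit Arguments.
Unset Strict Implicit.
Unset Printing Implicit Defensive.

Import GRing.Theory Num.Theory.
Local Open Scope complex_scope.

Lemma size_flatten_map_le (T U : Type) (F : T -> seq U) (s : seq T) K :
  (forall x, size (F x) <= K)%N -> (size (flatten (map F s)) <= size s * K)%N.
Proof. by move=> hF; elim: s => //= x s IH; rewrite size_cat mulSn leq_add. Qed.

Lemma complex_sumE (R : rcfType) (I : Type) (s : seq I) (c : I -> R[i]) :
  (\sum_(i <- s) c i = (\sum_(i <- s) complex.Re (c i)) +i* (\sum_(i <- s) complex.Im (c i)))%R.
Proof. by elim: s => [|i s IH]; rewrite ?big_nil // !big_cons IH; case: (c i). Qed.

Lemma cpow0 (R : realType) (b : R) : cpow b 0%R = 1%R.
Proof. by rewrite /cpow /= !mul0r expR0 cos0 sin0 mulr1 mulr0. Qed.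

Lemma zero_one_sum_all_one (R : realType) (I : eqType) (s : seq I) (m : I -> \bar R) K :
  (forall i, m i = 0%E \/ m i = 1%E) -> (\sum_(i <- s) m i)%E = (K%:R)%:E ->
  (size s <= K)%N -> forall i, i \in s -> m i = 1%E.
Proof.
move=> m01 hsum hsize.
pose b i := `[< m i = 1%E >].
have mb j : m j = ((b j : nat)%:R)%:E.
  by rewrite /b; case: asboolP => [->//|h]; case: (m01 j) => e; [rewrite e | exfalso; apply: h].
have bE j : b j -> m j = 1%E by move/asboolP.
clearbody b.
have hcount : count b s = K.
  move: hsum; rewrite (eq_bigr _ (fun j _ => mb j)) sumEFin -natr_sum.
  by move=> [/(mulrIn (oner_neq0 R)) <-]; rewrite -sumn_count sumnE big_map.
have : all b s by rewrite all_count hcount eqn_leq hsize -[X in (X <= _)%N]hcount count_size.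
by move=> /allP hall i /hall /bE.
Qed.

Section PiecewiseConstant.
Local Open Scope classical_set_scope.
Local Open Scope ring_scope.
Variables (d : measure_display) (T : measurableType d) (R : realType).
Variable mu : {measure set T -> \bar R}.
Variables (I : choiceType) (s : seq I) (P : I -> set T).
Hypothesis s_uniq : uniq s.
Hypothesis mP : forall i, measurable (P i).
Hypothesis P_disj : forall i j, i != j -> P i `&` P j = set0.

Let D := \big[setU/set0]_(i <- s) P i.

Lemma measurable_fun_piecewise (c : I -> R) (phi : T -> R) :
  (forall i u, i \in s -> P i u -> phi u = c i) -> measurable_fun D (EFin \o phi).
Proof.
move=> hphi mD Y mY.
rewrite (_ : _ `&` _ = \big[setU/set0]_(i <- s) (if `[< Y (c i)%:E >] then P i else set0)).
  by apply: bigsetU_measurable => i _; case: asboolP => _; [exact: mP | exact: measurable0].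
rewrite /D -!bigcup_seq; apply/seteqP; split => u.
  by move=> [[i hi hu] hy]; exists i => //; case: asboolP => // []; rewrite -(hphi i u).
move=> [i hi]; case: asboolP => // hy hu.
by split; [exists i | rewrite /= (hphi i u)].
Qed.

Lemma integral_piecewise (c : I -> R) (phi : T -> R) :
  (forall i u, i \in s -> P i u -> phi u = c i) ->
  (\int[mu]_(u in D) (phi u)%:E = \sum_(i <- s) (c i)%:E * mu (P i))%E.
Proof.
move=> hphi; have Ptriv : trivIset [set` s] P.
  move=> i j _ _ [u [h1 h2]]; apply/eqP/negPn/negP => /P_disj hij.
  by have : (P i `&` P j) u by []; rewrite hij.
rewrite integral_bigsetU_EFin //; last exact: measurable_fun_piecewise hphi.
rewrite big_seq [RHS]big_seq; apply: eq_bigr => i hi.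
rewrite -integral_cst //; apply: eq_integral => u; rewrite inE => hu /=.
by rewrite (hphi i u).
Qed.

Lemma measure_bigsetU_seq : mu D = (\sum_(i <- s) mu (P i))%E.
Proof.
have := @integral_piecewise (fun _ => 1) (fun _ => 1) (fun _ _ _ _ => erefl).
have mD : measurable D by apply: bigsetU_measurable => i _; exact: mP.
rewrite (_ : (\int[mu]_(u in D) _)%E = (\int[mu]_(u in D) (cst 1%:E) u)%E) //.
rewrite integral_cst // mul1e => ->.
by apply: eq_bigr => i _; rewrite mul1e.
Qed.

End PiecewiseConstant.

Section CountableCylinders.
Variables (X : choiceType) (e : nat -> X).
Hypothesis e_surj : forall x, exists k, e k = x.
Local Open Scope classical_set_scope.

Notation measurableAut := (@measurable _ (AutM X)).

Lemma measurable_cylinder x y : measurableAut [set u : AutM X | u x = y].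
Proof. by apply: sub_sigma_algebra; exists x, y. Qed.

Lemma measurable_forall_nat (P : nat -> set (AutM X)) :
  (forall k, measurableAut (P k)) -> measurableAut [set u | forall k, P k u].
Proof.
move=> mP; rewrite (_ : [set u | _] = \bigcap_k P k); first exact: bigcapT_measurable.
by apply/seteqP; split => u hu k //; apply: hu.
Qed.

Lemma measurable_exists_nat (P : nat -> set (AutM X)) :
  (forall k, measurableAut (P k)) -> measurableAut [set u | exists k, P k u].
Proof.
move=> mP; rewrite (_ : [set u | _] = \bigcup_k P k); first exact: bigcupT_measurable.
by apply/seteqP; split => u [k]; exists k.
Qed.

Lemma measurable_forall_vertex (P : X -> set (AutM X)) :
  (forall x, measurableAut (P x)) -> measurableAut [set u | forall x, P x u].
Proof.
move=> mP; rewrite (_ : [set u | _] = [set u | forall k, P (e k) u]).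
  exact: measurable_forall_nat.
by apply/seteqP; split => u hu x //; have [k <-] := e_surj x.
Qed.

Lemma measurable_exists_vertex (P : X -> set (AutM X)) :
  (forall x, measurableAut (P x)) -> measurableAut [set u | exists x, P x u].
Proof.
move=> mP; rewrite (_ : [set u | _] = [set u | exists k, P (e k) u]).
  exact: measurable_exists_nat.
apply/seteqP; split => u [x hx]; last by exists (e x).
by have [k ek] := e_surj x; exists k; rewrite ek.
Qed.

Lemma measurable_at x (Q : X -> Prop) : measurableAut [set u : AutM X | Q (u x)].
Proof.
rewrite (_ : [set u | _] =
    \bigcup_k (if `[< Q (e k) >] then [set u : AutM X | u x = e k] else set0)).
  apply: bigcupT_measurable => k.
  by case: asboolP => _; [exact: measurable_cylinder | exact: measurable0].
apply/seteqP; split => u.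
  by move=> hq; have [k hk] := e_surj (u x); exists k => //; rewrite hk; case: asboolP.
by move=> [k _]; case: asboolP => // hq /= ->.
Qed.

Lemma measurable_at2 x y (Q : X -> X -> Prop) :
  measurableAut [set u : AutM X | Q (u x) (u y)].
Proof.
rewrite (_ : [set u | _] =
    \bigcup_k ([set u : AutM X | u x = e k] `&` [set u | Q (e k) (u y)])).
  apply: bigcupT_measurable => k.
  by apply: measurableI; [exact: measurable_cylinder | exact: measurable_at].
apply/seteqP; split => u; last by move=> [k _ [/= ->]].
by move=> hq; have [k hk] := e_surj (u x); exists k => //; split => //=; rewrite hk.
Qed.

Lemma bijectiveP (u : X -> X) :
  bijective u <-> injective u /\ forall y, exists x, u x = y.
Proof.
split=> [[v uK vK]|[hi /boolp.choice [v hv]]].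
  by split=> [|y]; [apply: can_inj uK | exists (v y)].
by exists v => // x; apply: hi; rewrite hv.
Qed.

Lemma measurable_Bw (adj : X -> X -> Prop) w : measurableAut (Bw adj w).
Proof.
rewrite (_ : Bw adj w = [set u : AutM X | ((forall x y, u x = u y -> x = y) /\
    (forall y, exists x, u x = y)) /\ (forall x y, adj x y <-> adj (u x) (u y))] `&`
    ([set u | exists k m, forall j, u (w (j + k)%N) = w (j + m)%N] `&`
     [set u | exists x, u x = x])).
  apply: measurableI; [apply: measurableI; [apply: measurableI|] | apply: measurableI].
  - apply: measurable_forall_vertex => x; apply: measurable_forall_vertex => y.
    exact: (measurable_at2 x y (fun a b => a = b -> x = y)).
  - apply: measurable_forall_vertex => y; apply: measurable_exists_vertex => x.
    exact: (measurable_at x (eq^~ y)).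
  - apply: measurable_forall_vertex => x; apply: measurable_forall_vertex => y.
    exact: (measurable_at2 x y (fun a b => adj x y <-> adj a b)).
  - apply: measurable_exists_nat => k; apply: measurable_exists_nat => m.
    apply: measurable_forall_nat => j; exact: (measurable_at _ (eq^~ (w (j + m)%N))).
  - by apply: measurable_exists_vertex => x; exact: (measurable_at x (eq^~ x)).
apply/funext => u; apply/propext.
by rewrite /Bw /is_aut /ends_eq /= (propext (bijectiveP u)).
Qed.

End CountableCylinders.

(** * Walks and rays in a tree *)

Section RegularTree.
Variables (X : choiceType) (adj : X -> X -> Prop).

Definition fwalk (f : nat -> X) n := forall i, (i < n)%N -> adj (f i) (f i.+1).
Definition fnbt (f : nat -> X) n := forall i, (i.+2 <= n)%N -> f i <> f i.+2.
Definition walk_seq (f : nat -> X) n := mkseq (fun i => f i.+1) n.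
Definition splice (f g : nat -> X) n i := if (i <= n)%N then f i else g (i - n)%N.

Lemma walk_seqS f n : walk_seq f n.+1 = f 1%N :: walk_seq (fun i => f i.+1) n.
Proof.
rewrite /walk_seq /mkseq /= -[in LHS](addn0 1) iotaDl -map_comp; congr (_ :: _).
Qed.

Lemma walk_walk_seq f n : fwalk f n -> walk adj (f 0%N) (walk_seq f n).
Proof.
elim: n f => [|n IH] f hf //.
rewrite walk_seqS /=; split; first exact: hf.
apply: (IH (fun i => f i.+1)) => i hi; apply: hf; lia.
Qed.

Lemma last_walk_seq f n : last (f 0%N) (walk_seq f n) = f n.
Proof.
by elim: n f => [|n IH] f //; rewrite walk_seqS /= (IH (fun i => f i.+1)).
Qed.

Lemma size_walk_seq f n : size (walk_seq f n) = n.
Proof. exact: size_mkseq. Qed.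

Lemma nbt_walk_seq f n :
  fnbt f n.+1 -> nbt (f 0%N) (f 1%N) (walk_seq (fun i => f i.+1) n).
Proof.
elim: n f => [|n IH] f hf //.
rewrite walk_seqS /=; split; first by apply: hf; lia.
apply: (IH (fun i => f i.+1)) => i hi; apply: hf; lia.
Qed.

Lemma nonbacktracking_walk_seq f n :
  fnbt f n -> nonbacktracking (f 0%N) (walk_seq f n).
Proof. by case: n => [|n] hf //; rewrite walk_seqS; apply: nbt_walk_seq. Qed.

Lemma fwalkW f n m : (m <= n)%N -> fwalk f n -> fwalk f m.
Proof. by move=> hm h i hi; apply: h; lia. Qed.

Lemma fnbtW f n m : (m <= n)%N -> fnbt f n -> fnbt f m.
Proof. by move=> hm h i hi; apply: h; lia. Qed.

Lemma fnbt_rev f n : fnbt f n -> fnbt (fun i => f (n - i)%N) n.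
Proof.
move=> h i hi; have -> : (n - i = (n - i.+2).+2)%N by lia.
by move=> e; apply: (h (n - i.+2)%N); [lia | rewrite e].
Qed.

Lemma fwalk_splice f g n m :
  f n = g 0%N -> fwalk f n -> fwalk g m -> fwalk (splice f g n) (n + m).
Proof.
move=> e hf hg i hi; rewrite /splice.
have [hin|hni] := ltnP i n; first by rewrite ltnW //; apply: hf.
have [->|hne] := eqVneq i n.
  by rewrite leqnn subSn // subnn e; apply: (hg 0%N); lia.
have -> : (i <= n)%N = false by lia.
rewrite subSn; last by lia.
by apply: hg; lia.
Qed.

Lemma fnbt_splice f g n m : f n = g 0%N -> fnbt f n -> fnbt g m ->
  ((0 < n)%N -> (0 < m)%N -> f n.-1 <> g 1%N) -> fnbt (splice f g n) (n + m).
Proof.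
move=> e hf hg hj i hi; rewrite /splice.
have [h2|h2] := leqP i.+2 n.
  have -> : (i <= n)%N by lia.
  by apply: hf.
have [hn|hn] := eqVneq i.+1 n.
  have -> : (i <= n)%N by lia.
  have -> : (i.+2 - n = 1)%N by lia.
  have -> : i = n.-1 by lia.
  by apply: hj; lia.
have [hn'|hn'] := eqVneq i n.
  have -> : (i <= n)%N by lia.
  have -> : (i.+2 - n = 2)%N by lia.
  by rewrite hn' e; apply: hg; lia.
have -> : (i <= n)%N = false by lia.
have -> : (i.+2 - n = (i - n).+2)%N by lia.
by apply: hg; lia.
Qed.

Lemma splice_tail f g n : f n = g 0%N -> forall j, splice f g n (n + j) = g j.
Proof.
move=> e j; rewrite /splice; case: ifP => hj; last by rewrite addKn.
have -> : j = 0%N by lia.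
by rewrite addn0 e.
Qed.

Lemma walkn_fwalk n x y : walkn adj n x y -> exists f, [/\ fwalk f n, f 0%N = x & f n = y].
Proof.
case=> p [hw [hl <-]].
elim: p x hw hl => [|z p IH] x hw hl.
  by exists (fun _ => x); split => // i; rewrite ltn0.
case: hw => hxz /IH /(_ hl) [f [hf f0 fe]].
exists (fun i => if i is i'.+1 then f i' else x); split => //.
by case=> [|i] hi /=; [rewrite f0 | apply: hf].
Qed.

Lemma fwalk_walkn f n : fwalk f n -> walkn adj n (f 0%N) (f n).
Proof.
move=> h; exists (walk_seq f n).
by rewrite last_walk_seq size_walk_seq; split => //; apply: walk_walk_seq.
Qed.

Lemma dist_eq0 x y : (exists n, walkn adj n x y) -> dist adj x y = 0%N -> x = y.
Proof.
rewrite /dist => hxy; case: pselect => [h|//].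
case: ex_minnP => m /asboolP [p [_ [hl hs]]] _ m0.
by move: hl hs; rewrite m0; case: p.
Qed.

Hypothesis adj_sym : forall x y, adj x y -> adj y x.
Hypothesis acyc : forall x p, walk adj x p -> nonbacktracking x p -> last x p = x -> p = [::].

Lemma fwalk_rev f n : fwalk f n -> fwalk (fun i => f (n - i)%N) n.
Proof.
move=> h i hi; apply: adj_sym; have -> : (n - i = (n - i.+1).+1)%N by lia.
by apply: h; lia.
Qed.

Lemma fnbt_closed f n : fwalk f n -> fnbt f n -> f n = f 0%N -> n = 0%N.
Proof.
move=> hw hb e.
have := acyc (walk_walk_seq hw) (nonbacktracking_walk_seq hb).
by rewrite last_walk_seq => /(_ e) /(congr1 size); rewrite size_walk_seq.
Qed.

Lemma fnbt_uniq n m f g : fwalk f n -> fnbt f n -> fwalk g m -> fnbt g m ->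
  f 0%N = g 0%N -> f n = g m -> n = m /\ forall i, (i <= n)%N -> f i = g i.
Proof.
elim: n m f g => [|n IH] m f g hf nf hg ng e0 en.
  have m0 : m = 0%N by apply: (fnbt_closed hg ng); rewrite -en.
  by subst m; split => // i; rewrite leqn0 => /eqP ->.
case: m hg ng en => [|m] hg ng en.
  by have := fnbt_closed hf nf (etrans en (esym e0)).
have [efg|nfg] := pselect (f n = g m).
  have [nm hi] := IH m f g (fwalkW (leqnSn _) hf) (fnbtW (leqnSn _) nf)
    (fwalkW (leqnSn _) hg) (fnbtW (leqnSn _) ng) e0 efg.
  subst m; split => // i; rewrite leq_eqVlt ltnS => /orP[/eqP -> //|]; exact: hi.
(* otherwise f followed by g backwards is a non-backtracking cycle *)
pose g' i := g (m.+1 - i)%N.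
have e : f n.+1 = g' 0%N by rewrite /g' subn0.
have hj : (0 < n.+1)%N -> (0 < m.+1)%N -> f n <> g' 1%N.
  by move=> _ _; rewrite /g' subn1.
have := fnbt_closed (fwalk_splice e hf (fwalk_rev hg)) (fnbt_splice e nf (fnbt_rev ng) hj).
rewrite (splice_tail e m.+1) /g' subnn /splice leq0n => /(_ (esym e0)); lia.
Qed.

Lemma fwalk_reduce f n : fwalk f n ->
  exists g m, [/\ (m <= n)%N, fwalk g m, fnbt g m, g 0%N = f 0%N & g m = f n].
Proof.
elim: n => [|n IH] hf.
  by exists f, 0%N; split => // i; rewrite ltn0.
have [g [m [hm hg ng g0 gm]]] := IH (fwalkW (leqnSn _) hf).
have [[m0 e]|hne] := pselect ((0 < m)%N /\ g m.-1 = f n.+1).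
  by exists g, m.-1; split => //; [lia | apply: fwalkW hg; lia | apply: fnbtW ng; lia].
exists (fun i => if (i <= m)%N then g i else f n.+1), m.+1; split.
- lia.
- move=> i hi; have [h|h] := ltnP i m; first by rewrite ltnW //; apply: hg.
  have -> : i = m by lia.
  by rewrite leqnn gm; apply: hf.
- move=> i hi; have [h|h] := leqP i.+2 m.
    have -> : (i <= m)%N by lia.
    by apply: ng.
  have -> : i = m.-1 by lia.
  have -> : (m.-1 <= m)%N by lia.
  by move=> e; apply: hne; split => //; lia.
- by [].
- by rewrite ltnn.
Qed.

Lemma dist_fnbt f n : fwalk f n -> fnbt f n -> dist adj (f 0%N) (f n) = n.
Proof.
move=> hf nf; rewrite /dist; case: pselect => [hex|[]]; last by exists n; apply: fwalk_walkn.
case: ex_minnP => m /asboolP /walkn_fwalk [g [hg g0 gm]] hmin.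
apply/eqP; rewrite eqn_leq hmin; last exact/asboolP/fwalk_walkn.
have [g' [m' [hm' hg' ng' g0' gm']]] := fwalk_reduce hg.
have e0 : f 0%N = g' 0%N by rewrite g0' g0.
have en : f n = g' m' by rewrite gm' gm.
by have [-> _] := fnbt_uniq hf nf hg' ng' e0 en; rewrite hm'.
Qed.

Lemma dist_refl x : dist adj x x = 0%N.
Proof. by have := @dist_fnbt (fun _ => x) 0%N; apply=> i; rewrite ltn0. Qed.

Lemma ray_fwalk r n : ray adj r -> fwalk r n.
Proof. by move=> h i _; case: (h i). Qed.

Lemma ray_fnbt r n : ray adj r -> fnbt r n.
Proof. by move=> h i _; case: (h i). Qed.

Lemma ray_shift r k : ray adj r -> ray adj (fun i => r (k + i)%N).
Proof. by move=> h i; rewrite !addnS; case: (h (k + i)%N). Qed.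

Lemma ray_inj r : ray adj r -> injective r.
Proof.
move=> h; suff le_inj i j : (i <= j)%N -> r i = r j -> i = j.
  by move=> i j e; have [/le_inj|/ltnW /le_inj] := leqP i j; [apply | move=> /(_ (esym e))].
move=> hij e; have hs := ray_shift i h.
have := fnbt_closed (ray_fwalk (n := j - i) hs) (ray_fnbt (n := j - i) hs).
rewrite addn0 subnKC // => /(_ (esym e)); lia.
Qed.

Lemma dist_ray r i k : ray adj r -> dist adj (r i) (r (i + k)%N) = k.
Proof.
move=> h; have hs := ray_shift i h.
by have := dist_fnbt (ray_fwalk (n := k) hs) (ray_fnbt (n := k) hs); rewrite addn0.
Qed.

Lemma ends_eq_sym (r r' : nat -> X) : ends_eq r r' -> ends_eq r' r.
Proof. by case=> k [m h]; exists m, k => j; rewrite h. Qed.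

Lemma ends_eq_trans (r1 r2 r3 : nat -> X) :
  ends_eq r1 r2 -> ends_eq r2 r3 -> ends_eq r1 r3.
Proof.
case=> k [m h] [k' [m' h']]; exists (k' + k)%N, (m + m')%N => j.
by rewrite addnA h -(addnA j k' m) (addnC k' m) addnA h' -addnA.
Qed.

Lemma ends_eq_shift (r : nat -> X) k : ends_eq (fun i => r (k + i)%N) r.
Proof. by exists 0%N, k => j; rewrite addn0 addnC. Qed.

Lemma ends_eq_comp (h : X -> X) (r r' : nat -> X) :
  ends_eq r r' -> ends_eq (h \o r) (h \o r').
Proof. by case=> k [m e]; exists k, m => j /=; rewrite e. Qed.

Lemma ray_to_shift x w r k : ray_to adj x w r -> ray_to adj (r k) w (fun i => r (k + i)%N).
Proof.
move=> [hr [_ rw]]; split; first exact: ray_shift.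
by split; [rewrite addn0 | exact: ends_eq_trans (ends_eq_shift _ _) rw].
Qed.

Lemma ray_unique r r' : ray adj r -> ray adj r' -> r 0%N = r' 0%N -> ends_eq r r' ->
  r =1 r'.
Proof.
move=> h h' e0 [k [m e]].
have ek : r k = r' m by have := e 0%N; rewrite !add0n.
have [km hi] := fnbt_uniq (ray_fwalk (n := k) h) (ray_fnbt (n := k) h)
  (ray_fwalk (n := m) h') (ray_fnbt (n := m) h') e0 ek.
subst m => i; have [/hi //|hki] := leqP i k.
by have := e (i - k)%N; rewrite subnK // ltnW.
Qed.

Lemma ray_meet_tail ro rx i k : ray adj ro -> ray adj rx -> ends_eq ro rx ->
  ro i = rx k -> forall j, ro (i + j)%N = rx (k + j)%N.
Proof.
move=> h h' e p; apply: ray_unique (ray_shift i h) (ray_shift k h') _ _.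
  by rewrite !addn0.
apply: ends_eq_trans (ends_eq_shift _ _) _.
exact: ends_eq_trans e (ends_eq_sym (ends_eq_shift _ _)).
Qed.

Lemma tail_offset ro rx a b a' b' : ray adj rx ->
  (forall j, ro (a + j)%N = rx (b + j)%N) ->
  (forall j, ro (a' + j)%N = rx (b' + j)%N) -> (a + b' = a' + b)%N.
Proof.
move=> h e e'; have := e a'; rewrite addnC e' => /(ray_inj h); lia.
Qed.

Lemma confluence_on_rays o x w ro rx : ray_to adj o w ro -> ray_to adj x w rx ->
  exists i k, ro i = confluence adj o x w /\ rx k = confluence adj o x w.
Proof.
move=> hro hrx; have [[hr [r0 rw]] [hx [x0 xw]]] := (hro, hrx).
have erx : ends_eq ro rx := ends_eq_trans rw (ends_eq_sym xw).
pose P y := exists ro rx ry, ray_to adj o w ro /\ ray_to adj x w rx /\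
  ray_to adj y w ry /\ forall v, (on_ray ro v /\ on_ray rx v) <-> on_ray ry v.
have exP : exists y, P y.
  have hex : exists a, `[< exists b, forall j, ro (a + j)%N = rx (b + j)%N >].
    by case: erx => k [m e]; exists k; apply/asboolP; exists m => j; rewrite addnC e addnC.
  case: (ex_minnP hex) => a /asboolP [b e] amin.
  exists (ro a), ro, rx, (fun i => ro (a + i)%N); do 2!split => //.
  split; first exact: ray_to_shift.
  move=> v; split=> [[[i <-] [k vk]]|[j <-]]; last by split; [exists (a + j)%N | exists (b + j)%N].
  have ai : (a <= i)%N by apply: amin; apply/asboolP; exists k; apply: ray_meet_tail.
  by exists (i - a)%N; rewrite subnKC.
have [ro' [rx' [ry [[hro' [ro0' row']] [[hrx' [rx0' rxw']] [[_ [ry0 _]] hv]]]]]] :=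
  ClassicalEpsilon.epsilon_spec (inhabits o) P exP.
have [[i yi] [k yk]] : on_ray ro' (ry 0%N) /\ on_ray rx' (ry 0%N) by apply/hv; exists 0%N.
exists i, k; rewrite /confluence -/P -ry0; split; [rewrite -yi | rewrite -yk].
  by apply: ray_unique => //; [rewrite r0 ro0' | exact: ends_eq_trans rw (ends_eq_sym row')].
by apply: ray_unique => //; [rewrite x0 rx0' | exact: ends_eq_trans xw (ends_eq_sym rxw')].
Qed.

Lemma horo_tail o x w ro rx a b : ray_to adj o w ro -> ray_to adj x w rx ->
  (forall j, ro (a + j)%N = rx (b + j)%N) -> horo adj o x w = (a%:Z - b%:Z)%R.
Proof.
move=> hro hrx e; have [[hr [r0 rw]] [hx [x0 xw]]] := (hro, hrx).
have [i [k [yi yk]]] := confluence_on_rays hro hrx.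
rewrite /horo -{1}yi -yk -{1}r0 -{1}x0 -(add0n i) -(add0n k) !dist_ray //.
have erx : ends_eq ro rx := ends_eq_trans rw (ends_eq_sym xw).
have := tail_offset hx e (ray_meet_tail hr hx erx (etrans yi (esym yk))).
lia.
Qed.

Lemma xptE o w r n : ray_to adj o w r -> xpt adj o w n = r n.
Proof.
move=> [hr [r0 rw]].
pose P v := exists r, ray_to adj o w r /\ on_ray r v /\ dist adj o v = n.
have exP : exists v, P v.
  by exists (r n), r; do 2!split => //; [exists n | rewrite -r0 -(add0n n) dist_ray].
have [r' [[hr' [r0' rw']] [[i ri] di]]] := ClassicalEpsilon.epsilon_spec (inhabits o) P exP.
have er : r' =1 r.
  by apply: ray_unique => //; [rewrite r0 r0' | exact: ends_eq_trans rw' (ends_eq_sym rw)].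
by move: di; rewrite /xpt -/P -ri er -{1}r0 -{1}(add0n i) dist_ray // => ->.
Qed.

Lemma ray_from_walk rp m f k : ray adj rp -> fwalk f m -> f m = rp k ->
  exists r, [/\ ray adj r, r 0%N = f 0%N & exists a b, forall j, r (a + j)%N = rp (b + j)%N].
Proof.
move=> hrp; elim: m f k => [|m IH] f k hf fe.
  by exists (fun i => rp (k + i)%N); split; [exact: ray_shift | rewrite addn0 | exists 0%N, k].
have [r [hr r0 [a [b e]]]] := IH (fun i => f i.+1) k (fun i hi => hf i.+1 hi) fe.
have [r1|r1] := pselect (r 1%N = f 0%N).
  exists (fun i => r i.+1); split; first by move=> i; case: (hr i.+1).
    exact: r1.
  by exists a, b.+1 => j; rewrite -addnS e addnS addSn.
exists (fun i => if i is i'.+1 then r i' else f 0%N); split => //.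
  by case=> [|i] /=; [rewrite r0; split; [apply: hf | exact: nesym r1] | exact: hr].
by exists a.+1, b => j; rewrite addSn /= e.
Qed.

Lemma common_tail_min (rx rp : nat -> X) a : (forall j, rp (a + j)%N = rx (a + j)%N) ->
  exists2 a', (a' <= a)%N & (forall j, rp (a' + j)%N = rx (a' + j)%N) /\
    (a' = 0%N \/ rp a'.-1 <> rx a'.-1).
Proof.
elim: a => [|a IH] e; first by exists 0%N => //; split => //; left.
have [h|h] := pselect (rp a = rx a); last by exists a.+1 => //; split => //; right.
have [|a' ha' ea'] := IH; last by exists a' => //; apply: leqW.
by case=> [|j]; rewrite ?addn0 // addnS -addSn e.
Qed.

Lemma splice_ray h n (r : nat -> X) : fwalk h n -> fnbt h n -> ray adj r -> h n = r 0%N ->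
  ((0 < n)%N -> h n.-1 <> r 1%N) -> ray adj (splice h r n).
Proof.
move=> fh nh hr e hj i; split.
  by apply: (fwalk_splice (m := i.+3) e fh (ray_fwalk hr)); lia.
by apply: (fnbt_splice (m := i.+3) e nh (ray_fnbt hr)); [move=> h0 _; apply: hj | lia].
Qed.

Lemma path_via_meet (rx rp : nat -> X) a : ray adj rx -> ray adj rp ->
  (forall j, rp (a + j)%N = rx (a + j)%N) -> (a = 0%N \/ rp a.-1 <> rx a.-1) ->
  let h := splice rx (fun i => rp (a - i)%N) a in
  [/\ fwalk h (a + a), fnbt h (a + a), h 0%N = rx 0%N & h (a + a)%N = rp 0%N].
Proof.
move=> hrx hrp e hm h.
have E : rx a = rp (a - 0)%N by rewrite subn0 -(addn0 a) e.
have J : (0 < a)%N -> (0 < a)%N -> rx a.-1 <> rp (a - 1)%N.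
  by rewrite subn1 => a0 _ ee; case: hm => [|[]]; [lia | rewrite ee].
split.
- exact: fwalk_splice E (ray_fwalk hrx) (fwalk_rev (ray_fwalk hrp)).
- exact: fnbt_splice E (ray_fnbt hrx) (fnbt_rev (ray_fnbt hrp)) J.
- by rewrite /h /splice leq0n.
- by rewrite /h (splice_tail E) subnn.
Qed.

Variable q : nat.
Variable nbf : X -> 'I_q.+1 -> X.
Hypothesis nbf_adj : forall x y, adj x y <-> exists i, nbf x i = y.

Fixpoint nb_ends (n : nat) (p v : X) : seq X :=
  if n is n'.+1 then flatten [seq nb_ends n' v (nbf v i) | i <- enum 'I_q.+1 & nbf v i != p]
  else [:: v].

Lemma nb_ends_mem n f : fwalk f n.+1 -> fnbt f n.+1 -> f n.+1 \in nb_ends n (f 0%N) (f 1%N).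
Proof.
elim: n f => [|n IH] f hf nf; first by rewrite mem_seq1.
have [i hi] : exists i, nbf (f 1%N) i = f 2%N by apply/nbf_adj; apply: hf.
apply/flatten_mapP; exists i.
  by rewrite mem_filter mem_enum andbT hi; apply/eqP => e; apply: (nf 0%N); rewrite ?e.
by rewrite hi; apply: (IH (fun i => f i.+1)) => j hj; [apply: hf | apply: nf].
Qed.


Lemma size_nb_ends n p v : adj v p -> (size (nb_ends n p v) <= q ^ n)%N.
Proof.
elim: n p v => [|n IH] p v hvp //=.
have hF i : (size (nb_ends n v (nbf v i)) <= q ^ n)%N.
  by apply/IH/adj_sym/nbf_adj; exists i.
apply: leq_trans (size_flatten_map_le _ hF) _.
rewrite expnS leq_mul2r size_filter; apply/orP; right.
have [i0 hi0] := (nbf_adj v p).1 hvp.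
have := count_predC (fun i => nbf v i != p) (enum 'I_q.+1).
have : (0 < count (predC (fun i => nbf v i != p)) (enum 'I_q.+1))%N.
  by rewrite -has_count; apply/hasP; exists i0; rewrite ?mem_enum //= hi0 eqxx.
rewrite size_enum_ord; lia.
Qed.

Lemma aut_inj u : is_aut adj u -> injective u.
Proof. by case=> [[g gK _] _]; apply: can_inj gK. Qed.

Lemma aut_comp u v : is_aut adj u -> is_aut adj v -> is_aut adj (u \o v).
Proof. by move=> [bu au] [bv av]; split; [exact: bij_comp | move=> x y; rewrite av au]. Qed.

Lemma aut_inv u v : is_aut adj u -> cancel u v -> cancel v u -> is_aut adj v.
Proof. by move=> [_ au] uK vK; split; [exists u | move=> x y; rewrite (au (v x) (v y)) !vK]. Qed.

Lemma aut_ray u r : is_aut adj u -> ray adj r -> ray adj (u \o r).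
Proof.
move=> hu hr i; have [h1 h2] := hr i.
by split; [exact: (hu.2 _ _).1 | move=> /(aut_inj hu)].
Qed.

Hypothesis conn : forall x y, exists p, walk adj x p /\ last x p = y.

Fixpoint follow (x : X) (s : seq 'I_q.+1) : X :=
  if s is i :: s' then follow (nbf x i) s' else x.

Lemma follow_walk x p : walk adj x p -> exists s, follow x s = last x p.
Proof.
elim: p x => [|z p IH] x /=; first by exists [::].
case=> /nbf_adj [i <-] /IH [s hs]; by exists (i :: s).
Qed.

Lemma countable_vertices (x0 : X) : exists e : nat -> X, forall x, exists k, e k = x.
Proof.
exists (fun k => if unpickle k is Some s then follow x0 s else x0) => x.
have [p [/follow_walk [s hs] hl]] := conn x0 x.
by exists (pickle s); rewrite pickleK hs hl.
Qed.

Lemma walkn_exists x y : exists n, walkn adj n x y.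
Proof. by have [p [hw hl]] := conn x y; exists (size p), p. Qed.

(** * The horosphere of o and the stabilisers B_{w+,n} *)

Variables (o : X) (wm wp rm rp : nat -> X).
Hypothesis hrm : ray_to adj o wm rm.
Hypothesis hrp : ray_to adj o wp rp.
Hypothesis hrmp : rm 1%N <> rp 1%N.

Lemma aut_fix_ray u k : is_aut adj u -> ends_eq (u \o wp) wp -> u (rp k) = rp k ->
  forall j, u (rp (k + j)%N) = rp (k + j)%N.
Proof.
move=> hu he hk; have [hr [_ rw]] := hrp.
apply: (ray_unique (aut_ray hu (ray_shift k hr)) (ray_shift k hr)); first by rewrite /= addn0.
apply: ends_eq_trans (ends_eq_comp u (ends_eq_shift rp k)) _.
apply: ends_eq_trans (ends_eq_comp u rw) _.
apply: ends_eq_trans he (ends_eq_trans (ends_eq_sym rw) _).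
exact/ends_eq_sym/ends_eq_shift.
Qed.

Lemma horo_rp n : horo adj o (rp n) wp = Posz n.
Proof.
by rewrite (horo_tail (a := n) (b := 0%N) hrp (ray_to_shift n hrp)) ?subr0.
Qed.

Lemma horo_o : horo adj o o wp = 0%R.
Proof. by have [_ [r0 _]] := hrp; have := horo_rp 0; rewrite r0. Qed.

Lemma same_level_geometry x rx a : ray adj rx -> rx 0%N = x ->
  (forall j, rp (a + j)%N = rx (a + j)%N) ->
  exists a', [/\ (a' <= a)%N, dist adj x o = (a' + a')%N, horo adj o x wm = (- Posz (a' + a'))%R
             & forall j, rp (a' + j)%N = rx (a' + j)%N].
Proof.
move=> hrx rx0 e; have [hr [r0 _]] := hrp; have [hm [m0 mw]] := hrm.
have [a' a'a [e' hmin]] := common_tail_min e.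
have [fh nh h0 h2] := path_via_meet hrx hr e' hmin.
set h := splice _ _ _ in fh nh h0 h2.
exists a'; split => //.
  by have := dist_fnbt fh nh; rewrite h0 h2 rx0 r0.
(* since rm 1 <> rp 1, the path from x to o via the meeting point goes on along [o, wm) *)
have ho : h (a' + a')%N = rm 0%N by rewrite h2 r0 m0.
have hj : (0 < a' + a')%N -> h (a' + a').-1 <> rm 1%N.
  move=> a0; rewrite /h /splice; case: ifP => ha.
    have a1 : a' = 1%N by lia.
    by subst a'; have := e' 0%N; rewrite !addn0 /= => <-; apply: nesym.
  have -> : (a' - ((a' + a').-1 - a') = 1)%N by lia.
  exact: nesym.
have hxm : ray_to adj x wm (splice h rm (a' + a')).
  split; first exact: splice_ray fh nh hm ho hj.
  split; first by rewrite /splice leq0n h0.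
  apply: ends_eq_trans _ mw; exists (a' + a')%N, 0%N => j.
  by rewrite addn0 addnC (splice_tail ho).
rewrite (horo_tail (a := 0%N) (b := (a' + a')%N) hrm hxm) ?sub0r //.
by move=> j; rewrite (splice_tail ho).
Qed.

Lemma Bwn_image_o n u : is_aut adj u -> ends_eq (u \o wp) wp -> u (rp n) = rp n ->
  [/\ horo adj o (u o) wp = 0%R, (dist adj (u o) o <= 2 * n)%N &
      horo adj o (u o) wm = (- Posz (dist adj (u o) o))%R].
Proof.
move=> hu he hn; have [hr [r0 rw]] := hrp.
have e j : rp (n + j)%N = (u \o rp) (n + j)%N by rewrite /= aut_fix_ray.
have x0 : (u \o rp) 0%N = u o by rewrite /= r0.
have [a' [ha hd hh _]] := same_level_geometry (aut_ray hu hr) x0 e.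
have hrt : ray_to adj (u o) wp (u \o rp).
  by split; [exact: aut_ray | split; [|exact: ends_eq_trans (ends_eq_comp u rw) he]].
by rewrite (horo_tail hrp hrt e) subrr hd hh; split => //; lia.
Qed.

Lemma horoball_sub_nb_ends n x : horo adj o x wp = 0%R -> (dist adj x o <= 2 * n)%N ->
  x \in nb_ends n (rp n.+1) (rp n).
Proof.
move=> hh hd; have [hr [r0 rw]] := hrp.
have [p [hw hl]] := conn x o.
have [f [hf f0 fe]] : exists f, [/\ fwalk f (size p), f 0%N = x & f (size p) = o].
  by apply: walkn_fwalk; exists p.
have fe' : f (size p) = rp 0%N by rewrite fe r0.
have [rx [hrx rx0 [a [b eab]]]] := ray_from_walk hr hf fe'.
have hrt : ray_to adj x wp rx.
  split=> //; split; first by rewrite rx0 f0.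
  by apply: ends_eq_trans _ rw; exists a, b => j; rewrite addnC eab addnC.
have eba j : rp (b + j)%N = rx (a + j)%N by rewrite eab.
have ba : b = a.
  by move: hh; rewrite (horo_tail hrp hrt eba) => /eqP; rewrite subr_eq0 => /eqP [].
rewrite ba in eba.
have [a' [_ hd' _ e']] := same_level_geometry hrx (etrans rx0 f0) eba.
have an : (a' <= n)%N by lia.
have := nb_ends_mem (fwalk_rev (ray_fwalk (n := n.+1) hrx)) (fnbt_rev (ray_fnbt (n := n.+1) hrx)).
rewrite /= subnn subn0 subn1 /= rx0 f0.
have -> : rx n.+1 = rp n.+1 by have := e' (n.+1 - a')%N; rewrite subnKC //; lia.
have -> : rx n = rp n by have := e' (n - a')%N; rewrite subnKC.
done.
Qed.

(** * The integral over B_{w+,n} *)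

Local Open Scope classical_set_scope.

Variables (R : realType) (mu : {measure set (AutM X) -> \bar R}%R).
Hypothesis hmu : haar_normalized adj q o wp mu.

Definition horoball n := [set x : X | horo adj o x wp = 0%R /\ (dist adj x o <= 2 * n)%N].
Definition fibre n x := [set u : AutM X | Bwn adj o wp n u /\ u o = x].

Lemma measurable_Bwn n : measurable (Bwn adj o wp n : set (AutM X)).
Proof.
have [e e_surj] := countable_vertices o.
exact: measurableI (measurable_Bw e_surj adj wp) (measurable_cylinder _ _).
Qed.

Lemma measurable_fibre n x : measurable (fibre n x).
Proof. exact: measurableI (measurable_Bwn n) (measurable_cylinder o x). Qed.

Lemma horoball_finite n : finite_set (horoball n).
Proof.
apply: sub_finite_set (finite_seq (nb_ends n (rp n.+1) (rp n))).
by move=> x [hh hd]; apply: horoball_sub_nb_ends.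
Qed.

Definition horoball_seq n : seq X := finmap.enum_fset (fset_set (horoball n)).

Lemma mem_horoball_seq n x : (x \in horoball_seq n) = (x \in horoball n).
Proof. exact: (in_fset_set (horoball_finite n) x). Qed.

Lemma size_horoball_seq n : (size (horoball_seq n) <= q ^ n)%N.
Proof.
apply: leq_trans (size_nb_ends n (hrp.1 n).1).
apply: uniq_leq_size; first exact: finmap.fset_uniq.
move=> x; rewrite mem_horoball_seq => /set_mem [hh hd].
exact: horoball_sub_nb_ends.
Qed.

Lemma measure_Bwn n : mu (Bwn adj o wp n) = ((q ^ n)%:R)%:E.
Proof.
by rewrite /Bwn (xptE n hrp) hmu.2 horo_rp -exprnP natrX.
Qed.

Lemma fibre_translate n u0 : Bwn adj o wp n u0 ->
  fibre n (u0 o) = [set (u0 \o (v : X -> X)) | v in [set v : AutM X | Bw adj wp v /\ v o = o]].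
Proof.
rewrite /Bwn (xptE n hrp) => -[[hu0 [he0 _]] hx0].
have [ui uiK iuK] : bijective u0 by case: hu0.
have hui := aut_inv hu0 uiK iuK.
have heui : ends_eq (ui \o wp) wp.
  have e : ui \o (u0 \o wp) = wp by apply/funext => t /=; rewrite uiK.
  by apply: ends_eq_sym; rewrite -{1}e; apply: ends_eq_comp.
apply/seteqP; split => [u [[[hu [he _]] hx] ux]|_ [v [[hv [hev _]] vo] <-]].
  exists (ui \o u); last by apply/funext => t /=; rewrite iuK.
  have uio : (ui \o u) o = o by rewrite /= ux uiK.
  split=> //; split; first exact: aut_comp.
  by split; [exact: ends_eq_trans (ends_eq_comp ui he) heui | exists o].
have [_ [r0 _]] := hrp.
have v0 : v (rp 0%N) = rp 0%N by rewrite r0.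
have hvn : v (rp n) = rp n by exact: aut_fix_ray hv hev v0 n.
split; last by rewrite /= vo.
rewrite /Bwn /= (xptE n hrp) hvn hx0; split => //; split; first exact: aut_comp.
by split; [exact: ends_eq_trans (ends_eq_comp u0 hev) he0 | exists (rp n); rewrite /= hvn].
Qed.

Lemma fibre_measure01 n x : mu (fibre n x) = 0%E \/ mu (fibre n x) = 1%E.
Proof.
have [[u0 [hu0 <-]]|nofib] := pselect (exists u0, fibre n x u0); last first.
  left; rewrite (_ : fibre n x = set0) ?measure0 //.
  by apply/seteqP; split => // u hu; apply: nofib; exists u.
have hB : Bw adj wp u0 by case: hu0.
have mStab : measurable [set v : AutM X | Bw adj wp v /\ v o = o].
  have [e e_surj] := countable_vertices o.
  exact: measurableI (measurable_Bw e_surj adj wp) (measurable_cylinder o o).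
right; rewrite fibre_translate // hmu.1 //; last by move=> v [].
by rewrite hmu.2 horo_o expr0z.
Qed.

Lemma fibre_disjoint n x y : x != y -> fibre n x `&` fibre n y = set0.
Proof.
move=> /eqP nxy; apply/seteqP; split => // u [[_ ux] [_ uy]].
by apply: nxy; rewrite -ux -uy.
Qed.

Lemma Bwn_cover n : Bwn adj o wp n = \big[setU/set0]_(x <- horoball_seq n) fibre n x.
Proof.
rewrite -bigcup_seq; apply/seteqP; split => [u hu|u [x _ []] //].
exists (u o) => //; rewrite /= mem_horoball_seq; apply: mem_set.
move: hu => -[[hu [he _]]]; rewrite (xptE n hrp) => /(Bwn_image_o hu he) [? ? _].
by split.
Qed.

Lemma horoball_seq_uniq n : uniq (horoball_seq n).
Proof. exact: finmap.fset_uniq. Qed.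

Lemma fibre_measure1 n x : x \in horoball_seq n -> mu (fibre n x) = 1%E.
Proof.
(* at most q^n fibres, each of measure 0 or 1, and of total measure q^n *)
apply: (zero_one_sum_all_one (fibre_measure01 n) _ (size_horoball_seq n)).
rewrite -(measure_bigsetU_seq mu (horoball_seq_uniq n) (measurable_fibre n) (@fibre_disjoint n)).
by rewrite -Bwn_cover measure_Bwn.
Qed.

Variables (s' : R[i]) (f : X -> (nat -> X) -> R[i]).
Hypothesis hwp : ray adj wp.
Hypothesis hf : lc_compact adj f.

Lemma integrand_on_fibre n g x u : is_aut adj g -> fibre n x u ->
  (onGM o wp f (g \o u) * cpow (q%:R : R) (((horo adj o (u o) wm)%:~R : R)%:C * expo s'))%R =
  (f (g x) (g \o wp) * cpow (q%:R : R) (- ((dist adj x o)%:R : R)%:C * expo s'))%R.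
Proof.
move=> hg [[[hu [he _]] hxn] <-]; rewrite (xptE n hrp) in hxn.
have [_ _ ->] := Bwn_image_o hu he hxn.
rewrite /onGM /=; congr (_ * cpow _ (_ * _))%R.
  apply: hf.1; [exact: aut_ray hg (aut_ray hu hwp) | exact: aut_ray hg hwp |].
  by move: (ends_eq_comp g he).
by rewrite mulrNz pmulrn; apply/eqP; rewrite eq_complex /= oppr0 !eqxx.
Qed.

Lemma Isn_eq_sum n g : is_aut adj g ->
  Isn adj mu q o wm wp s' n (onGM o wp f) g =
  (\sum_(x \in horoball n)
     f (g x) (g \o wp) * cpow (q%:R : R) (- ((dist adj x o)%:R : R)%:C * expo s'))%R.
Proof.
move=> hg; rewrite (fsbig_finite _ _ (horoball_finite n)) -/(horoball_seq n) complex_sumE.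
pose c x := (f (g x) (g \o wp) * cpow (q%:R : R) (- ((dist adj x o)%:R : R)%:C * expo s'))%R.
have sum_fibres (h : X -> R) :
    (\sum_(x <- horoball_seq n) (h x)%:E * mu (fibre n x))%E = (\sum_(x <- horoball_seq n) h x)%:E.
  rewrite -sumEFin big_seq [RHS]big_seq; apply: eq_bigr => x hx.
  by rewrite fibre_measure1 // mule1.
rewrite /Isn /cintegral Bwn_cover /Rintegral.
rewrite (integral_piecewise _ (horoball_seq_uniq n) (measurable_fibre n) (@fibre_disjoint n)
  (c := fun x => complex.Re (c x))); last by move=> x u _ /(integrand_on_fibre hg) ->.
rewrite (integral_piecewise _ (horoball_seq_uniq n) (measurable_fibre n) (@fibre_disjoint n)
  (c := fun x => complex.Im (c x))); last by move=> x u _ /(integrand_on_fibre hg) ->.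
by rewrite !sum_fibres.
Qed.

Lemma horoball0 : horoball 0 = [set o].
Proof.
apply/seteqP; split => [x [_]|_ ->]; last by split; [exact: horo_o | rewrite dist_refl].
by rewrite muln0 leqn0 => /eqP /(dist_eq0 (walkn_exists x o)).
Qed.

Lemma Isn0 g : is_aut adj g -> Isn adj mu q o wm wp s' 0 (onGM o wp f) g = onGM o wp f g.
Proof.
move=> hg; rewrite Isn_eq_sum // horoball0 fsbig_set1 dist_refl.
have -> : (- ((0%N%:R : R))%:C = 0 :> R[i])%R by apply/eqP; rewrite eq_complex /= oppr0 !eqxx.
by rewrite mul0r cpow0 mulr1.
Qed.

End RegularTree.

Local Open Scope classical_set_scope.
Local Open Scope ring_scope.

Theorem lemma5p5 (R : realType) (q : nat) (X : choiceType)
    (adj : X -> X -> Prop) (o : X) (wm wp : nat -> X)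
    (mu : {measure set (AutM X) -> \bar R})
    (s' : R[i]) (f : X -> (nat -> X) -> R[i]) :
  (2 <= q)%N ->
  is_regular_tree adj q ->
  ray adj wm -> ray adj wp -> ~ ends_eq wm wp ->
  (exists rm rp, ray_to adj o wm rm /\ ray_to adj o wp rp /\
                 rm 1%N <> rp 1%N) ->
  haar_normalized adj q o wp mu ->
  lc_compact adj f ->
  (forall (n : nat) (g : X -> X), is_aut adj g ->
     Isn adj mu q o wm wp s' n (onGM o wp f) g =
     \sum_(x \in [set x : X | horo adj o x wp = 0 /\
                             (dist adj x o <= 2 * n)%N])
        f (g x) (g \o wp) *
        cpow (q%:R : R) (- ((dist adj x o)%:R : R)%:C * expo s'))
  /\
  (forall g : X -> X, is_aut adj g ->
     Isn adj mu q o wm wp s' 0 (onGM o wp f) g = onGM o wp f g).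
Proof.
move=> _ tree _ hwp _ [rm [rp [hrm [hrp hrmp]]]] hmu hf.
have [adj_sym [_ [nbhd [conn acyc]]]] := tree.
have [nbf hnbf] := boolp.choice nbhd.
have nbf_adj x y : adj x y <-> exists i, nbf x i = y := (hnbf x).2 y.
split => [n g|g] hg.
  exact (Isn_eq_sum adj_sym acyc nbf_adj conn hrm hrp hrmp hmu s' hwp hf n hg).
exact (Isn0 adj_sym acyc nbf_adj conn hrm hrp hrmp hmu s' hwp hf hg).
Qed.
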